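(* Let $X_0^*$ be a $\{1,2,\dots\}$-valued random variable with $\mathbf P(X_0^*=k)\sim c_0m^{-k}k^{-\alpha}$ as $k\to\infty$, for some $0<c_0<\infty$ and $2\le\alpha\le4$. Let $\ell_0\ge1$ be the smallest integer $k\ge1$ with $\mathbf P(X_0^*=k)>0$. For integers $M>\ell_0$ let $\varrho=\varrho(M,\alpha)$ be as follows: if $\alpha=2$, $\varrho:=0$; if $2<\alpha\le4$, $\varrho$ is independent of $X_0^*$ with $\mathbf P(\varrho=0)=M^{-(\alpha-2)}=1-\mathbf P(\varrho=\ell_0)$. Set $X_0^{(M)}:=\varrho\mathbf 1_{\{X_0^*=\ell_0\}}+X_0^*\mathbf 1_{\{\ell_0<X_0^*\le M\}}$ and $p_M:=\big(1+\mathbf E\{[(m-1)X_0^{(M)}-1]m^{X_0^{(M)}}\}\big)^{-1}$. Then, as $M\to\infty$, $$p_M-p_c(X_0^* )\sim\begin{cases}\frac{c_{48}}{M^{\alpha-2}},&2<\alpha\le4,\\[2pt] \frac{1}{(m-1)c_0}\,\frac{1}{\log M},&\alpha=2,\end{cases}$$ where for $2<\alpha\le4$, $c_{48}:=[p_c(X_0^* )]^2c_{49}>0$ with $$c_{49}:=\frac{(m-1)c_0}{\alpha-2}+\{[(m-1)\ell_0-1]m^{\ell_0}+1\}\,\mathbf P(X_0^*=\ell_0).$$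
   Context: Fix an integer $m\ge2$. $p_c(X_0^* ):=\frac{1}{1+\mathbf E\{[(m-1)X_0^*-1]m^{X_0^*}\}}$, interpreted as $0$ when the expectation is infinite (so $p_c(X_0^* )=0$ when $\alpha=2$ and $p_c(X_0^* )>0$ when $\alpha>2$); it is the critical parameter of the recursive system $X_{n+1}\overset d=(X_{n,1}+\cdots+X_{n,m}-1)^+$ started from the law $(1-p)\delta_0+pP_{X_0^*}$. $a_M\sim b_M$ means $a_M/b_M\to1$. *)

From Stdlib Require Import Reals Lra Lia ClassicalEpsilon.
Open Scope R_scope.

Definition fm (m k : nat) : R :=
  ((INR m - 1) * INR k - 1) * INR m ^ k.

(* p_c(X_0^* ) where P is the law of X_0^* : P k = P(X_0^* = k).
   E[f(X_0^* )] is the series sum_k f(k) P k; p_c := 1/(1+E) if the series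
   converges, and 0 if the expectation is infinite. *)
Definition pc (m : nat) (P : nat -> R) : R :=
  match excluded_middle_informative
          (exists l, infinite_sum (fun k => fm m k * P k) l) with
  | left H => 1 / (1 + proj1_sig (constructive_indefinite_description _ H))
  | right _ => 0
  end.

(* Law of X_0^{(M)} := rho 1{X* = l0} + X* 1{l0 < X* <= M}, where rho is
   independent of X*, P(rho = 0) = M^{-(alpha-2)} = 1 - P(rho = l0)
   (for alpha = 2 this gives rho = 0 a.s.). *)
Definition lawXM (P : nat -> R) (l0 : nat) (alpha : R) (M k : nat) : R :=
  if Nat.eqb k 0 then
    P l0 * Rpower (INR M) (- (alpha - 2)) + (1 - sum_f_R0 P M)
  else if Nat.eqb k l0 then
    P l0 * (1 - Rpower (INR M) (- (alpha - 2)))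
  else if (Nat.ltb l0 k && Nat.leb k M)%bool then P k
  else 0.

Definition pM (m : nat) (P : nat -> R) (l0 : nat) (alpha : R) (M : nat) : R :=
  / (1 + sum_f_R0 (fun k => fm m k * lawXM P l0 alpha M k) M).

Definition asym_equiv (a b : nat -> R) : Prop :=
  Un_cv (fun n => a n / b n) 1.

(* Write a_k := f(k) P(X_0^* = k) with f(k) = [(m-1)k - 1] m^k, so that
   a_k ~ L k^{1-alpha}, L := (m-1) c0, and let E_M := E f(X_0^{(M)}).  A direct
   computation (expectation_truncated) gives, for M >= l0,
       E_M = sum_{k<=M} a_k - M^{-(alpha-2)} P(l0) (1 + f(l0)) - P(X_0^* > M).
   Everything else is a comparison of the partial sums of a_k with an explicit
   telescoping sum:
   - if alpha > 2, put s := alpha - 2; a_k is equivalent to the increments of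
     (L/s) k^{-s}, so the series converges to E0 = E f(X_0^* ), its tail is
     ~ (L/s) M^{-s}, and M P(X_0^* > M) <= tail shows P(X_0^* > M) = o(M^{-s});
     hence E0 - E_M ~ c49 M^{-s} and p_M - p_c = (E0 - E_M) p_c / (1 + E_M);
   - if alpha = 2, a_k is equivalent to L (ln k - ln (k-1)), so by a Stolz-type
     argument sum_{k<=M} a_k ~ L ln M, the series diverges (p_c = 0) and
     p_M = 1 / (1 + E_M) ~ 1 / (L ln M). *)

From Stdlib Require Import Reals Lra Lia Arith ClassicalEpsilon.
From Coquelicot Require Import Coquelicot.
Open Scope R_scope.

(* [equiv_seq u v]: u_k ~ v_k, stated with an absolute error relative to the
   comparison sequence v (which is then eventually nonnegative); this form is
   the one that adds up well over partial sums. *)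
Definition equiv_seq (u v : nat -> R) : Prop :=
  forall eps, 0 < eps -> eventually (fun k => Rabs (u k - v k) <= eps * v k).

Definition negligible (x v : nat -> R) : Prop :=
  forall eps, 0 < eps -> eventually (fun k => Rabs (x k) <= eps * v k).

Lemma equiv_seq_nonneg u v : equiv_seq u v -> eventually (fun k => 0 <= v k).
Proof.
  intros H. generalize (H 1 Rlt_0_1). apply filter_imp. intros k Hk.
  pose proof (Rabs_pos (u k - v k)). lra.
Qed.

Lemma equiv_seq_ext u v u' v' :
  eventually (fun k => u k = u' k) -> eventually (fun k => v k = v' k) ->
  equiv_seq u v -> equiv_seq u' v'.
Proof.
  intros Hu Hv H eps He.
  generalize (filter_and _ _ (filter_and _ _ Hu Hv) (H eps He)).
  apply filter_imp. intros k [[<- <-] Hk]. exact Hk.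
Qed.

Lemma equiv_seq_refl v : eventually (fun k => 0 <= v k) -> equiv_seq v v.
Proof.
  intros Hv eps He. generalize Hv. apply filter_imp. intros k Hk.
  apply Rabs_le_between'. nra.
Qed.

Lemma equiv_seq_sym u v : equiv_seq u v -> equiv_seq v u.
Proof.
  intros H eps He.
  pose proof (Rmin_l (1/2) (eps/2)). pose proof (Rmin_r (1/2) (eps/2)).
  set (d := Rmin (1/2) (eps / 2)) in *.
  assert (Hd : 0 < d) by (apply Rmin_pos; lra).
  generalize (filter_and _ _ (H d Hd) (equiv_seq_nonneg _ _ H)).
  apply filter_imp. intros k [Hk Hv]. apply Rabs_le_between' in Hk.
  assert (0 <= (1/2 - d) * v k) by (apply Rmult_le_pos; lra).
  assert (v k <= 2 * u k) by lra.
  assert (d * v k <= d * (2 * u k)) by (apply Rmult_le_compat_l; lra).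
  assert (0 <= (eps - 2 * d) * u k) by (apply Rmult_le_pos; lra).
  apply Rabs_le_between'. lra.
Qed.

Lemma equiv_seq_trans u v w : equiv_seq u v -> equiv_seq v w -> equiv_seq u w.
Proof.
  intros H1 H2 eps He.
  pose proof (Rmin_l 1 (eps/3)). pose proof (Rmin_r 1 (eps/3)).
  set (d := Rmin 1 (eps / 3)) in *.
  assert (Hd : 0 < d) by (apply Rmin_pos; lra).
  generalize (filter_and _ _ (filter_and _ _ (H1 d Hd) (H2 d Hd)) (equiv_seq_nonneg _ _ H2)).
  apply filter_imp. intros k [[Hk1 Hk2] Hw].
  apply Rabs_le_between' in Hk1, Hk2. apply Rabs_le_between'. nra.
Qed.

Lemma equiv_seq_mul f u v : eventually (fun k => 0 <= f k) -> equiv_seq u v ->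
  equiv_seq (fun k => f k * u k) (fun k => f k * v k).
Proof.
  intros Hf H eps He. generalize (filter_and _ _ Hf (H eps He)).
  apply filter_imp. intros k [Hfk Hk]. apply Rabs_le_between' in Hk.
  apply Rabs_le_between'. nra.
Qed.

Lemma equiv_seq_plus u1 v1 u2 v2 : equiv_seq u1 v1 -> equiv_seq u2 v2 ->
  equiv_seq (fun k => u1 k + u2 k) (fun k => v1 k + v2 k).
Proof.
  intros H1 H2 eps He. generalize (filter_and _ _ (H1 eps He) (H2 eps He)).
  apply filter_imp. intros k [Hk1 Hk2]. apply Rabs_le_between' in Hk1, Hk2.
  apply Rabs_le_between'. lra.
Qed.

Lemma equiv_seq_add_negligible u v x : equiv_seq u v -> negligible x v ->
  equiv_seq (fun k => u k + x k) v.
Proof.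
  intros H1 H2 eps He.
  assert (He2 : 0 < eps / 2) by lra.
  generalize (filter_and _ _ (H1 _ He2) (H2 _ He2)).
  apply filter_imp. intros k [Hk1 Hk2]. apply Rabs_le_between' in Hk1.
  apply Rabs_le_between in Hk2. apply Rabs_le_between'. lra.
Qed.

Lemma negligible_mono x v w : negligible x v -> eventually (fun k => v k <= w k) ->
  negligible x w.
Proof.
  intros H Hvw eps He. generalize (filter_and _ _ Hvw (H eps He)).
  apply filter_imp. intros k [Hk1 Hk2]. nra.
Qed.

Lemma equiv_seq_of_asym u v : eventually (fun k => 0 < v k) ->
  asym_equiv u v -> equiv_seq u v.
Proof.
  intros Hv H eps He. destruct (H eps He) as [N HN].
  generalize (filter_and _ _ Hv (ex_intro _ N HN : eventually _)).
  apply filter_imp. intros k [Hvk Hk]. unfold R_dist in Hk.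
  replace (u k - v k) with (v k * (u k / v k - 1)) by (field; lra).
  rewrite Rabs_mult, (Rabs_pos_eq (v k)) by lra. nra.
Qed.

Lemma cv_const c : Un_cv (fun _ => c) c.
Proof. apply is_lim_seq_Reals, is_lim_seq_const. Qed.

Lemma cv_ext_loc u v l : eventually (fun n => u n = v n) -> Un_cv u l -> Un_cv v l.
Proof.
  intros Huv Hu. apply is_lim_seq_Reals. apply is_lim_seq_Reals in Hu.
  exact (is_lim_seq_ext_loc u v l Huv Hu).
Qed.

Lemma cv_inv u l : l <> 0 -> Un_cv u l -> Un_cv (fun n => / u n) (/ l).
Proof.
  intros Hl Hu. apply is_lim_seq_Reals in Hu. apply is_lim_seq_Reals.
  apply (is_lim_seq_inv u l Hu). intros E. injection E. exact Hl.
Qed.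

Lemma lim_le_loc u v l1 l2 : eventually (fun n => u n <= v n) ->
  Un_cv u l1 -> Un_cv v l2 -> l1 <= l2.
Proof.
  intros Huv Hu Hv. apply is_lim_seq_Reals in Hu, Hv.
  exact (is_lim_seq_le_loc u v l1 l2 Huv Hu Hv).
Qed.

Lemma lim_abs_le u v l1 l2 : eventually (fun n => Rabs (u n) <= v n) ->
  Un_cv u l1 -> Un_cv v l2 -> Rabs l1 <= l2.
Proof.
  intros Huv Hu Hv. apply Rabs_le_between. split.
  - apply Ropp_le_cancel. rewrite Ropp_involutive.
    apply (lim_le_loc (fun n => - u n) v); [| apply CV_opp; exact Hu | exact Hv].
    generalize Huv. apply filter_imp. intros n Hn. apply Rabs_le_between in Hn. lra.
  - apply (lim_le_loc u v); [| exact Hu | exact Hv].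
    generalize Huv. apply filter_imp. intros n Hn. apply Rabs_le_between in Hn. lra.
Qed.

Lemma asym_of_equiv_seq u v : eventually (fun k => 0 < v k) ->
  equiv_seq u v -> asym_equiv u v.
Proof.
  intros Hv H eps He. assert (He2 : 0 < eps / 2) by lra.
  destruct (filter_and _ _ Hv (H _ He2)) as [N HN]. exists N. intros k Hk.
  destruct (HN k Hk) as [Hvk Hk']. unfold R_dist.
  replace (u k / v k - 1) with ((u k - v k) / v k) by (field; lra).
  unfold Rdiv. rewrite Rabs_mult, Rabs_inv, (Rabs_pos_eq (v k)) by lra.
  apply (Rmult_le_compat_r (/ v k)) in Hk'; [| left; apply Rinv_0_lt_compat; lra].
  replace (eps / 2 * v k * / v k) with (eps / 2) in Hk' by (field; lra). lra.
Qed.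

Lemma equiv_seq_mul_cv u v w c : eventually (fun k => 0 < v k) -> 0 < c ->
  equiv_seq u v -> Un_cv w c -> equiv_seq (fun k => u k * w k) (fun k => c * v k).
Proof.
  intros Hv Hc H Hw. apply equiv_seq_of_asym.
  { generalize Hv. apply filter_imp. intros k Hk. nra. }
  assert (Hratio := CV_mult _ _ _ _ (asym_of_equiv_seq u v Hv H)
                              (CV_mult _ _ _ _ Hw (cv_const (/ c)))).
  rewrite Rinv_r, !Rmult_1_l in Hratio by lra.
  refine (cv_ext_loc _ _ _ _ Hratio).
  generalize Hv. apply filter_imp. intros k Hk. field. lra.
Qed.

Lemma equiv_seq_inv u v : eventually (fun k => 0 < v k) ->
  equiv_seq u v -> equiv_seq (fun k => / u k) (fun k => / v k).
Proof.
  intros Hv H.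
  assert (Hratio := asym_of_equiv_seq u v Hv H).
  assert (Hu : eventually (fun k => 0 < u k)).
  { generalize (filter_and _ _ Hv (H (1/2) ltac:(lra))). apply filter_imp.
    intros k [Hvk Hk]. apply Rabs_le_between' in Hk. lra. }
  apply equiv_seq_of_asym.
  { generalize Hv. apply filter_imp. intros k Hk. apply Rinv_0_lt_compat, Hk. }
  apply (cv_ext_loc (fun k => / (u k / v k))).
  - generalize (filter_and _ _ Hu Hv). apply filter_imp. intros k [Huk Hvk].
    field. lra.
  - rewrite <- Rinv_1. apply cv_inv; [lra | exact Hratio].
Qed.

Lemma cv_0_of_equiv_seq u v : equiv_seq u v -> Un_cv v 0 -> Un_cv u 0.
Proof.
  intros H Hv eps He. destruct (H 1 Rlt_0_1) as [N1 H1].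
  destruct (Hv (eps / 2) ltac:(lra)) as [N2 H2].
  exists (N1 + N2)%nat. intros n Hn.
  specialize (H1 n ltac:(lia)). specialize (H2 n ltac:(lia)).
  unfold R_dist in *. rewrite Rminus_0_r in *.
  apply Rabs_le_between' in H1. apply Rabs_def2 in H2. apply Rabs_def1; lra.
Qed.

Lemma equiv_seq_cv_infty u v : equiv_seq u v -> cv_infty v -> cv_infty u.
Proof.
  intros H Hv B. destruct (H (1/2) ltac:(lra)) as [N1 H1].
  destruct (Hv (2 * Rabs B)) as [N2 H2]. exists (N1 + N2)%nat. intros n Hn.
  specialize (H1 n ltac:(lia)). specialize (H2 n ltac:(lia)).
  apply Rabs_le_between' in H1. pose proof (Rle_abs B). lra.
Qed.

Lemma not_cv_of_cv_infty u l : cv_infty u -> ~ Un_cv u l.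
Proof.
  intros Hinf Hcv. destruct (Hinf (l + 1)) as [N1 H1].
  destruct (Hcv 1 Rlt_0_1) as [N2 H2].
  specialize (H1 (N1 + N2)%nat ltac:(lia)). specialize (H2 (N1 + N2)%nat ltac:(lia)).
  unfold R_dist in H2. apply Rabs_def2 in H2. lra.
Qed.

Lemma negligible_of_bounded x v B : (forall k, Rabs (x k) <= B) -> cv_infty v ->
  negligible x v.
Proof.
  intros Hx Hv eps He. destruct (Hv (B / eps)) as [N HN]. exists N. intros k Hk.
  specialize (HN k Hk). apply (Rmult_lt_compat_l eps) in HN; [| exact He].
  replace (eps * (B / eps)) with B in HN by (field; lra).
  pose proof (Hx k). lra.
Qed.

Lemma partial_sum_diff_le a b N : (forall k, (N < k)%nat -> a k <= b k) ->
  forall n, (N <= n)%nat ->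
  sum_f_R0 a n - sum_f_R0 a N <= sum_f_R0 b n - sum_f_R0 b N.
Proof.
  intros H n Hn. induction Hn as [|n Hn IH]; [lra|].
  simpl. specialize (H (S n) ltac:(lia)). lra.
Qed.

Lemma partial_sum_diff_close a b N eps :
  (forall k, (N < k)%nat -> Rabs (a k - b k) <= eps * b k) ->
  forall n, (N <= n)%nat ->
  Rabs ((sum_f_R0 a n - sum_f_R0 a N) - (sum_f_R0 b n - sum_f_R0 b N))
    <= eps * (sum_f_R0 b n - sum_f_R0 b N).
Proof.
  intros H n Hn. apply Rabs_le_between'.
  induction Hn as [|n Hn IH]; [lra|].
  simpl. specialize (H (S n) ltac:(lia)). apply Rabs_le_between' in H. lra.
Qed.

Lemma sum_increments g n : sum_f_R0 (fun k => g (k - 1)%nat - g k) n = g 0%nat - g n.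
Proof.
  induction n as [|n IH]; simpl; [ring|].
  rewrite IH, Nat.sub_0_r. ring.
Qed.

Lemma partial_sum_nonneg_growing a : (forall k, 0 <= a k) -> Un_growing (sum_f_R0 a).
Proof. intros Ha n. simpl. specialize (Ha (S n)). lra. Qed.

Lemma equiv_seq_partial_sums a b : equiv_seq a b -> cv_infty (sum_f_R0 b) ->
  equiv_seq (sum_f_R0 a) (sum_f_R0 b).
Proof.
  intros H Hinf eps He. assert (He2 : 0 < eps / 2) by lra.
  destruct (H _ He2) as [N HN].
  set (C := Rabs (sum_f_R0 a N - sum_f_R0 b N)).
  destruct (Hinf (Rabs (sum_f_R0 b N) + 2 * C / eps)) as [N2 HN2].
  exists (N + N2)%nat. intros n Hn.
  pose proof (partial_sum_diff_close a b N (eps / 2)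
                (fun k Hk => HN k ltac:(lia)) n ltac:(lia)) as Hclose.
  specialize (HN2 n ltac:(lia)).
  apply Rabs_le_between' in Hclose. apply Rabs_le_between'.
  assert (Hb1 : eps * sum_f_R0 b N <= eps * Rabs (sum_f_R0 b N))
    by (apply Rmult_le_compat_l; [lra | apply Rle_abs]).
  assert (Hb2 : eps * - sum_f_R0 b N <= eps * Rabs (sum_f_R0 b N))
    by (apply Rmult_le_compat_l; [lra | rewrite <- Rabs_Ropp; apply Rle_abs]).
  pose proof (Rle_abs (sum_f_R0 a N - sum_f_R0 b N)) as HC1.
  pose proof (Rle_abs (- (sum_f_R0 a N - sum_f_R0 b N))) as HC2.
  rewrite Rabs_Ropp in HC2. fold C in HC1, HC2.
  assert (HC : eps * (Rabs (sum_f_R0 b N) + 2 * C / eps) = eps * Rabs (sum_f_R0 b N) + 2 * C)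
    by (field; lra).
  assert (eps * (Rabs (sum_f_R0 b N) + 2 * C / eps) < eps * sum_f_R0 b n)
    by (apply Rmult_lt_compat_l; lra).
  lra.
Qed.

Lemma series_cv_of_equiv_increments a G :
  (forall k, 0 <= a k) -> (forall k, 0 <= G k) ->
  equiv_seq a (fun k => G (k - 1)%nat - G k) -> exists E, Un_cv (sum_f_R0 a) E.
Proof.
  intros Ha HG H.
  destruct (H 1 Rlt_0_1) as [N HN].
  assert (Hbound : forall n, sum_f_R0 a n <= sum_f_R0 a N + 2 * G N).
  { intros n. pose proof (HG N). destruct (le_lt_dec N n) as [Hn | Hn].
    - assert (Hdom : forall k, (N < k)%nat -> a k <= (G (k - 1)%nat - G k) * 2).
      { intros k Hk. specialize (HN k ltac:(lia)). apply Rabs_le_between' in HN. lra. }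
      pose proof (partial_sum_diff_le _ _ N Hdom n Hn) as Hle.
      rewrite <- !scal_sum, !sum_increments in Hle.
      pose proof (HG n). lra.
    - pose proof (tech9 _ (partial_sum_nonneg_growing a Ha) n N ltac:(lia)). lra. }
  destruct (growing_cv (sum_f_R0 a) (partial_sum_nonneg_growing a Ha)) as [E HE].
  - exists (sum_f_R0 a N + 2 * G N). intros y [n ->]. apply Hbound.
  - exists E. exact HE.
Qed.

Lemma tail_equiv_of_equiv_increments a G E : Un_cv G 0 ->
  equiv_seq a (fun k => G (k - 1)%nat - G k) -> Un_cv (sum_f_R0 a) E ->
  equiv_seq (fun M => E - sum_f_R0 a M) G.
Proof.
  intros HG0 H HE eps He. destruct (H eps He) as [N HN]. exists N. intros M HM.
  pose proof (partial_sum_diff_close a _ M eps (fun k Hk => HN k ltac:(lia))) as Hclose.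
  assert (Hlim_G : Un_cv (fun n => G M - G n) (G M - 0))
    by (apply CV_minus; [apply cv_const | exact HG0]).
  assert (Hlim_a : Un_cv (fun n => sum_f_R0 a n - sum_f_R0 a M) (E - sum_f_R0 a M))
    by (apply CV_minus; [exact HE | apply cv_const]).
  rewrite Rminus_0_r in Hlim_G.
  apply (lim_abs_le (fun n => (sum_f_R0 a n - sum_f_R0 a M) - (G M - G n))
                    (fun n => eps * (G M - G n))).
  - exists M. intros n Hn. specialize (Hclose n Hn). rewrite !sum_increments in Hclose.
    replace (G M - G n) with (G 0%nat - G n - (G 0%nat - G M)) by ring. exact Hclose.
  - exact (CV_minus _ _ _ _ Hlim_a Hlim_G).
  - exact (CV_mult _ _ _ _ (cv_const eps) Hlim_G).
Qed.

Lemma nat_above x : exists N, x < INR N.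
Proof.
  destruct (INR_archimed 1 x Rlt_0_1) as [N HN]. exists N. lra.
Qed.

Lemma eventually_INR_ge x : eventually (fun k => x <= INR k).
Proof.
  destruct (nat_above x) as [N HN]. exists N. intros k Hk.
  apply le_INR in Hk. lra.
Qed.

Lemma ln_le_sub1 x : 0 < x -> ln x <= x - 1.
Proof.
  intros Hx. pose proof (exp_ineq1_le (ln x)) as H. rewrite exp_ln in H by exact Hx. lra.
Qed.

Lemma ln_INR_infty : cv_infty (fun n => ln (INR n)).
Proof.
  intros B. destruct (nat_above (exp B)) as [N HN]. exists N. intros n Hn.
  apply le_INR in Hn. pose proof (exp_pos B).
  rewrite <- (ln_exp B). apply ln_increasing; lra.
Qed.

Lemma Rpower_INR_neg_cv0 s : 0 < s -> Un_cv (fun n => Rpower (INR n) (- s)) 0.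
Proof.
  intros Hs eps He. destruct (ln_INR_infty (- ln eps / s)) as [N HN]. exists N.
  intros n Hn. specialize (HN n Hn). unfold R_dist. rewrite Rminus_0_r.
  unfold Rpower. rewrite Rabs_pos_eq by (left; apply exp_pos).
  rewrite <- (exp_ln eps) by exact He. apply exp_increasing.
  apply (Rmult_lt_compat_r s) in HN; [| exact Hs].
  replace (- ln eps / s * s) with (- ln eps) in HN by (field; lra). lra.
Qed.

Lemma ln_increment_bounds x : 1 < x -> 1 / x <= ln x - ln (x - 1) <= 1 / (x - 1).
Proof.
  intros Hx. split.
  - pose proof (ln_le_sub1 ((x - 1) / x) ltac:(apply Rdiv_lt_0_compat; lra)) as H.
    unfold Rdiv in H. rewrite ln_mult, ln_Rinv in H by (try apply Rinv_0_lt_compat; lra).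
    replace ((x - 1) * / x - 1) with (- (1 / x)) in H by (field; lra). lra.
  - pose proof (ln_le_sub1 (x / (x - 1)) ltac:(apply Rdiv_lt_0_compat; lra)) as H.
    unfold Rdiv in H. rewrite ln_mult, ln_Rinv in H by (try apply Rinv_0_lt_compat; lra).
    replace (x * / (x - 1) - 1) with (1 / (x - 1)) in H by (field; lra). lra.
Qed.

Lemma exp_le_inv_one_minus y : y < 1 -> exp y * (1 - y) <= 1.
Proof.
  intros Hy. pose proof (exp_ineq1_le (- y)) as H.
  assert (Hprod : exp y * exp (- y) = 1)
    by (rewrite <- exp_plus, Rplus_opp_r; apply exp_0).
  pose proof (exp_pos y). nra.
Qed.

(* The algebraic core of [power_increments_equiv]: with d = ln x - ln (x-1)
   and E = e^{s d}, the quantity (E - 1) x is s up to a relative error eps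
   once x is large. *)
Lemma exp_increment_estimate s x d E eps : 0 < s -> 0 < eps ->
  1 + s + (1 + s) / eps < x -> 1 <= d * x -> d * (x - 1) <= 1 ->
  1 + s * d <= E -> E * (1 - s * d) <= 1 ->
  Rabs ((E - 1) * x - s) <= eps * s.
Proof.
  intros Hs He Hx Hd1 Hd2 HE1 HE2.
  assert (Hq : 0 < (1 + s) / eps) by (apply Rdiv_lt_0_compat; lra).
  assert (Hex : eps * x > 1 + s + eps * s + eps).
  { apply (Rmult_lt_compat_l eps) in Hx; [| exact He].
    replace (eps * (1 + s + (1 + s) / eps)) with (eps + eps * s + (1 + s)) in Hx
      by (field; lra). lra. }
  assert (Hsd : s * d < 1) by nra.
  apply Rabs_le_between'. split; [nra |].
  assert (H1 : d * (x + (1 + eps) * s) <= 1 + eps).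
  { assert (x + (1 + eps) * s <= (1 + eps) * (x - 1)) by nra. nra. }
  assert (H2 : (E - 1) * x * (1 - s * d) <= s * (1 + eps) * (1 - s * d)) by nra.
  apply (Rmult_le_reg_r (1 - s * d)); lra.
Qed.

Lemma power_increments_equiv s : 0 < s ->
  equiv_seq (fun k => (Rpower (INR (k - 1)) (- s) - Rpower (INR k) (- s)) / s)
            (fun k => Rpower (INR k) (- (s + 1))).
Proof.
  intros Hs eps He.
  generalize (eventually_INR_ge (2 + s + (1 + s) / eps)). apply filter_imp.
  intros k Hk. assert (Hq : 0 < (1 + s) / eps) by (apply Rdiv_lt_0_compat; lra).
  assert (Hk1 : (1 <= k)%nat) by (apply INR_le; simpl; lra).
  rewrite minus_INR by exact Hk1. simpl (INR 1).
  set (x := INR k) in *.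
  pose proof (ln_increment_bounds x ltac:(lra)) as [Hd1 Hd2].
  set (d := ln x - ln (x - 1)) in *.
  set (E := exp (s * d)). set (G := exp (- s * ln x)).
  assert (HG : 0 < G) by apply exp_pos.
  assert (Hprev : Rpower (x - 1) (- s) = G * E).
  { unfold Rpower, G, E. rewrite <- exp_plus. f_equal. unfold d. ring. }
  assert (Hnext : Rpower x (- (s + 1)) = G / x).
  { unfold Rpower, G. replace (- (s + 1) * ln x) with (- s * ln x + - ln x) by ring.
    rewrite exp_plus, exp_Ropp, exp_ln by lra. field. lra. }
  change (Rpower x (- s)) with G. rewrite Hprev, Hnext.
  assert (Hdx1 : 1 <= d * x).
  { apply (Rmult_le_compat_r x) in Hd1; [| lra].
    replace (1 / x * x) with 1 in Hd1 by (field; lra). lra. }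
  assert (Hdx2 : d * (x - 1) <= 1).
  { apply (Rmult_le_compat_r (x - 1)) in Hd2; [| lra].
    replace (1 / (x - 1) * (x - 1)) with 1 in Hd2 by (field; lra). lra. }
  assert (Hsd : s * d < 1) by nra.
  pose proof (exp_increment_estimate s x d E eps Hs He ltac:(lra) Hdx1 Hdx2
                (exp_ineq1_le (s * d)) (exp_le_inv_one_minus (s * d) Hsd)) as Hest.
  replace ((G * E - G) / s - G / x) with (G / (s * x) * ((E - 1) * x - s)) by (field; lra).
  assert (0 < G / (s * x)) by (apply Rdiv_lt_0_compat; nra).
  rewrite Rabs_mult, (Rabs_pos_eq (G / (s * x))) by lra.
  apply Rle_trans with (G / (s * x) * (eps * s)); [apply Rmult_le_compat_l; lra |].
  right. field. lra.
Qed.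

Lemma log_increments_equiv :
  equiv_seq (fun k => ln (INR k) - ln (INR (k - 1))) (fun k => Rpower (INR k) (- 1)).
Proof.
  intros eps He.
  generalize (eventually_INR_ge (3 + 1 / eps)). apply filter_imp.
  intros k Hk. assert (Hq : 0 < 1 / eps) by (apply Rdiv_lt_0_compat; lra).
  assert (Hk1 : (1 <= k)%nat) by (apply INR_le; simpl; lra).
  rewrite minus_INR by exact Hk1. simpl (INR 1).
  set (x := INR k) in *.
  replace (-1) with (- (1)) by ring. rewrite Rpower_Ropp, Rpower_1 by lra.
  pose proof (ln_increment_bounds x ltac:(lra)) as [Hd1 Hd2].
  assert (Hgap : 1 / (x - 1) - 1 / x <= eps * / x).
  { replace (1 / (x - 1) - 1 / x) with (/ x * (1 / (x - 1))) by (field; lra).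
    rewrite (Rmult_comm eps). apply Rmult_le_compat_l; [left; apply Rinv_0_lt_compat; lra |].
    apply (Rmult_le_reg_r (x - 1)); [lra |].
    replace (1 / (x - 1) * (x - 1)) with 1 by (field; lra).
    apply (Rmult_le_compat_l eps) in Hk; [| lra].
    replace (eps * (3 + 1 / eps)) with (3 * eps + 1) in Hk by (field; lra). lra. }
  apply Rabs_le_between'. unfold Rdiv in *. lra.
Qed.

(* [ln] is total in the Stdlib, with value 0 at 0; this makes the first
   log increment vanish. *)
Lemma ln_0 : ln 0 = 0.
Proof.
  unfold ln. destruct (Rlt_dec 0 0) as [H | _]; [exfalso; exact (Rlt_irrefl 0 H) | reflexivity].
Qed.

Lemma sum_log_increments n :
  sum_f_R0 (fun k => ln (INR k) - ln (INR (k - 1))) n = ln (INR n).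
Proof.
  induction n as [|n IH].
  - simpl. rewrite ln_0. ring.
  - rewrite tech5, IH. replace (S n - 1)%nat with n by lia. ring.
Qed.

Lemma INR_ge_2 m : (2 <= m)%nat -> 2 <= INR m.
Proof. intros Hm. apply le_INR in Hm. simpl in Hm. lra. Qed.

Lemma fm_0 m : fm m 0 = -1.
Proof. unfold fm. simpl. ring. Qed.

Lemma fm_ge m k : (2 <= m)%nat -> (1 <= k)%nat -> INR k - 1 <= fm m k.
Proof.
  intros Hm Hk. unfold fm. pose proof (INR_ge_2 m Hm).
  apply le_INR in Hk. simpl in Hk.
  assert (1 <= INR m ^ k) by (apply pow_R1_Rle; lra).
  assert (INR k - 1 <= (INR m - 1) * INR k - 1) by nra.
  nra.
Qed.

Lemma fm_nonneg m k : (2 <= m)%nat -> (1 <= k)%nat -> 0 <= fm m k.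
Proof.
  intros Hm Hk. pose proof (fm_ge m k Hm Hk). apply le_INR in Hk. simpl in Hk. lra.
Qed.

Lemma fm_P_nonneg m P : (2 <= m)%nat -> (forall k, 0 <= P k) -> P 0%nat = 0 ->
  forall k, 0 <= fm m k * P k.
Proof.
  intros Hm HP HP0 [|k]; [rewrite HP0; lra |].
  apply Rmult_le_pos; [apply fm_nonneg; [exact Hm | lia] | apply HP].
Qed.

(* E f(X_0^{(M)}) in terms of the partial sums of f(k) P(X_0^* = k): the atom
   at l0 loses a fraction M^{-(alpha-2)} to 0, the mass beyond M goes to 0. *)
Lemma expectation_truncated m P l0 alpha M : (1 <= l0)%nat -> (l0 <= M)%nat ->
  P 0%nat = 0 -> (forall k, (1 <= k < l0)%nat -> P k = 0) ->
  sum_f_R0 (fun k => fm m k * lawXM P l0 alpha M k) M =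
  sum_f_R0 (fun k => fm m k * P k) M
  - Rpower (INR M) (- (alpha - 2)) * P l0 * (1 + fm m l0) - (1 - sum_f_R0 P M).
Proof.
  intros Hl0 HlM HP0 HPl.
  set (r := Rpower (INR M) (- (alpha - 2))). set (t := 1 - sum_f_R0 P M).
  assert (Hpartial : forall n, (n <= M)%nat ->
     sum_f_R0 (fun k => fm m k * lawXM P l0 alpha M k) n =
     sum_f_R0 (fun k => fm m k * P k) n - (P l0 * r + t)
     - (if Nat.leb l0 n then r * fm m l0 * P l0 else 0)).
  { induction n as [|n IH]; intros Hn.
    - simpl. unfold lawXM. simpl. rewrite fm_0, HP0.
      destruct l0; [lia |]. simpl. fold r t. ring.
    - simpl sum_f_R0. rewrite IH by lia. unfold lawXM at 1.
      rewrite (proj2 (Nat.eqb_neq (S n) 0)) by lia.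
      destruct (Nat.eqb_spec (S n) l0) as [<- | Hne].
      + rewrite (proj2 (Nat.leb_gt (S n) n)), Nat.leb_refl by lia. fold r. ring.
      + destruct (Nat.ltb_spec l0 (S n)) as [Hlt | Hge].
        * rewrite (proj2 (Nat.leb_le (S n) M)), (proj2 (Nat.leb_le l0 n)),
            (proj2 (Nat.leb_le l0 (S n))) by lia. simpl. ring.
        * rewrite (proj2 (Nat.leb_gt l0 n)), (proj2 (Nat.leb_gt l0 (S n))) by lia.
          rewrite (HPl (S n)) by lia. simpl. ring. }
  rewrite Hpartial, (proj2 (Nat.leb_le l0 M)) by lia. fold r t. ring.
Qed.

Lemma pc_of_series m P E0 :
  infinite_sum (fun k => fm m k * P k) E0 -> pc m P = 1 / (1 + E0).
Proof.
  intros HE. unfold pc. destruct (excluded_middle_informative _) as [H | H].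
  - destruct (constructive_indefinite_description _ H) as [l Hl]. simpl.
    rewrite (uniqueness_sum _ _ _ Hl HE). reflexivity.
  - exfalso. apply H. exists E0. exact HE.
Qed.

Lemma pc_of_divergent m P :
  ~ (exists l, infinite_sum (fun k => fm m k * P k) l) -> pc m P = 0.
Proof.
  intros Hdiv. unfold pc. destruct (excluded_middle_informative _) as [H | H]; tauto.
Qed.

Lemma summand_equiv m P c0 alpha : (2 <= m)%nat -> 0 < c0 ->
  asym_equiv P (fun k => c0 * / (INR m ^ k) * Rpower (INR k) (- alpha)) ->
  equiv_seq (fun k => fm m k * P k)
            (fun k => (INR m - 1) * c0 * Rpower (INR k) (1 - alpha)).
Proof.
  intros Hm Hc0 Hasym. pose proof (INR_ge_2 m Hm) as Hm2.
  assert (Hmk : forall k, 0 < INR m ^ k) by (intros; apply pow_lt; lra).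
  set (L := (INR m - 1) * c0). assert (HL : 0 < L) by (unfold L; nra).
  assert (HP : equiv_seq P (fun k => c0 * / (INR m ^ k) * Rpower (INR k) (- alpha))).
  { apply equiv_seq_of_asym; [| exact Hasym]. apply filter_forall. intros k.
    pose proof (Rinv_0_lt_compat _ (Hmk k)). pose proof (exp_pos (- alpha * ln (INR k))).
    unfold Rpower. apply Rmult_lt_0_compat; [apply Rmult_lt_0_compat |]; assumption. }
  apply (equiv_seq_mul (fm m)) in HP;
    [| exists 1%nat; intros k Hk; apply fm_nonneg; assumption].
  apply (equiv_seq_trans _ _ _ HP).
  set (q := fun k => L * Rpower (INR k) (1 - alpha)).
  assert (Hpow : forall k, (1 <= k)%nat ->
            Rpower (INR k) (1 - alpha) = INR k * Rpower (INR k) (- alpha)).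
  { intros k Hk. apply le_INR in Hk. simpl in Hk.
    replace (1 - alpha) with (1 + - alpha) by ring.
    rewrite Rpower_plus, Rpower_1 by lra. reflexivity. }
  (* f(k) m^{-k} = (m-1) k - 1, and the "-1" is negligible against k *)
  assert (Hsmall : negligible (fun k => - c0 * Rpower (INR k) (- alpha)) q).
  { intros eps He. assert (HeL : 0 < eps * L) by nra.
    pose proof (Rdiv_lt_0_compat c0 _ Hc0 HeL).
    generalize (eventually_INR_ge (1 + c0 / (eps * L))). apply filter_imp.
    intros k Hk. assert (Hk1 : (1 <= k)%nat) by (apply INR_le; simpl; lra).
    unfold q. rewrite Hpow by exact Hk1.
    pose proof (exp_pos (- alpha * ln (INR k))) as HR. fold (Rpower (INR k) (- alpha)) in HR.
    rewrite Rabs_left1 by nra.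
    assert (c0 <= eps * L * INR k).
    { assert (Heq : c0 / (eps * L) * (eps * L) = c0) by (field; lra). nra. }
    nra. }
  assert (Hq_pos : forall k, 0 <= q k).
  { intros k. unfold q, Rpower. pose proof (exp_pos ((1 - alpha) * ln (INR k))). nra. }
  pose proof (equiv_seq_add_negligible q q _
                (equiv_seq_refl q (filter_forall _ Hq_pos)) Hsmall) as Hq.
  refine (equiv_seq_ext _ _ _ _ _ (filter_forall _ (fun k => eq_refl)) Hq).
  exists 1%nat. intros k Hk. unfold q, L, fm. rewrite Hpow by exact Hk.
  field. apply Rgt_not_eq, Hmk.
Qed.

(* Since f(k) >= k - 1 >= M beyond M:  M P(X_0^* > M) <= sum_{k>M} f(k) P(k). *)
Lemma tail_prob_bound m P E0 M : (2 <= m)%nat -> (forall k, 0 <= P k) ->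
  infinite_sum P 1 -> infinite_sum (fun k => fm m k * P k) E0 ->
  INR M * (1 - sum_f_R0 P M) <= E0 - sum_f_R0 (fun k => fm m k * P k) M.
Proof.
  intros Hm HP HP1 HE0.
  apply (lim_le_loc (fun n => INR M * (sum_f_R0 P n - sum_f_R0 P M))
                    (fun n => sum_f_R0 (fun k => fm m k * P k) n
                              - sum_f_R0 (fun k => fm m k * P k) M)).
  - exists M. intros n Hn. rewrite Rmult_minus_distr_l, !scal_sum.
    apply partial_sum_diff_le; [| exact Hn]. intros k Hk.
    pose proof (fm_ge m k Hm ltac:(lia)). pose proof (HP k).
    apply le_INR in Hk. rewrite S_INR in Hk. nra.
  - apply CV_mult; [apply cv_const | apply CV_minus; [exact HP1 | apply cv_const]].
  - apply CV_minus; [exact HE0 | apply cv_const].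
Qed.

Lemma negligible_of_weighted_bound t T G : (forall M, 0 <= t M) ->
  eventually (fun M => INR M * t M <= T M) -> equiv_seq T G ->
  eventually (fun M => 0 < G M) -> negligible t G.
Proof.
  intros Ht Hbound HT HG eps He.
  generalize (filter_and _ _ (filter_and _ _ Hbound (HT 1 Rlt_0_1))
               (filter_and _ _ HG (eventually_INR_ge (2 / eps)))).
  apply filter_imp. intros M [[HtT HTG] [HGM HM]].
  apply Rabs_le_between' in HTG. rewrite Rabs_pos_eq by apply Ht.
  assert (2 <= eps * INR M).
  { apply (Rmult_le_compat_l eps) in HM; [| lra].
    replace (eps * (2 / eps)) with 2 in HM by (field; lra). exact HM. }
  pose proof (Ht M). nra.
Qed.

Lemma deficit_equiv_gt m P c0 alpha l0 :
  (2 <= m)%nat -> (forall k, 0 <= P k) -> P 0%nat = 0 -> infinite_sum P 1 ->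
  0 < c0 -> 2 < alpha ->
  asym_equiv P (fun k => c0 * / (INR m ^ k) * Rpower (INR k) (- alpha)) ->
  (1 <= l0)%nat -> (forall k, (1 <= k < l0)%nat -> P k = 0) ->
  exists E0, infinite_sum (fun k => fm m k * P k) E0 /\
    equiv_seq (fun M => E0 - sum_f_R0 (fun k => fm m k * lawXM P l0 alpha M k) M)
              (fun M => ((INR m - 1) * c0 / (alpha - 2) + (1 + fm m l0) * P l0)
                        * Rpower (INR M) (- (alpha - 2))).
Proof.
  intros Hm HP HP0 HP1 Hc0 Hal Hasym Hl0 HPl.
  set (s := alpha - 2). assert (Hs : 0 < s) by (unfold s; lra).
  set (K := (INR m - 1) * c0 / s).
  assert (HK : 0 < K) by (pose proof (INR_ge_2 m Hm); unfold K; apply Rdiv_lt_0_compat; nra).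
  set (a := fun k => fm m k * P k).
  set (G := fun k => K * Rpower (INR k) (- s)).
  assert (HG : forall k, 0 < G k) by (intros k; apply Rmult_lt_0_compat; [exact HK | apply exp_pos]).
  assert (Hinc : equiv_seq a (fun k => G (k - 1)%nat - G k)).
  { apply (equiv_seq_trans _ _ _ (summand_equiv m P c0 alpha Hm Hc0 Hasym)).
    apply equiv_seq_sym.
    refine (equiv_seq_ext _ _ _ _ _ _
              (equiv_seq_mul (fun _ => K * s) _ _ _ (power_increments_equiv s Hs))).
    - apply filter_forall. intros k. unfold G. field. lra.
    - apply filter_forall. intros k. unfold K, s.
      replace (1 - alpha) with (- (alpha - 2 + 1)) by ring. field. lra.
    - apply filter_forall. intros k. nra. }
  destruct (series_cv_of_equiv_increments a G (fm_P_nonneg m P Hm HP HP0)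
              (fun k => Rlt_le _ _ (HG k)) Hinc) as [E0 HE0].
  assert (HG0 : Un_cv G 0).
  { replace 0 with (K * 0) by ring.
    apply CV_mult; [apply cv_const | exact (Rpower_INR_neg_cv0 s Hs)]. }
  pose proof (tail_equiv_of_equiv_increments a G E0 HG0 Hinc HE0) as Htail.
  assert (Htprob : negligible (fun M => 1 - sum_f_R0 P M) G).
  { apply (negligible_of_weighted_bound _ (fun M => E0 - sum_f_R0 a M)).
    - intros M. pose proof (sum_incr P M 1 HP1 HP). lra.
    - apply filter_forall. intros M. exact (tail_prob_bound m P E0 M Hm HP HP1 HE0).
    - exact Htail.
    - exact (filter_forall _ HG). }
  exists E0. split; [exact HE0 |].
  set (C1 := (1 + fm m l0) * P l0).
  assert (HC1 : 0 <= C1)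
    by (apply Rmult_le_pos; [pose proof (fm_nonneg m l0 Hm Hl0); lra | apply HP]).
  (* the atom moved from l0 to 0 contributes C1 M^{-s} *)
  set (Gl := fun M => C1 / K * G M).
  assert (HGl : forall M, 0 <= Gl M).
  { intros M. apply Rmult_le_pos; [apply Rdiv_le_0_compat | apply Rlt_le, HG]; assumption. }
  assert (Hsplit : equiv_seq (fun M => (E0 - sum_f_R0 a M) + Gl M + (1 - sum_f_R0 P M))
                             (fun M => G M + Gl M)).
  { apply equiv_seq_add_negligible.
    - apply equiv_seq_plus; [exact Htail | apply equiv_seq_refl, filter_forall, HGl].
    - apply (negligible_mono _ _ _ Htprob), filter_forall. intros M. pose proof (HGl M). lra. }
  refine (equiv_seq_ext _ _ _ _ _ _ Hsplit).
  - exists l0. intros M HM. rewrite expectation_truncated by assumption.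
    unfold a, Gl, G, C1, s. field. lra.
  - apply filter_forall. intros M. unfold Gl, G. field. lra.
Qed.

Lemma pM_asymptotics_gt m P c0 alpha l0 :
  (2 <= m)%nat -> (forall k, 0 <= P k) -> P 0%nat = 0 -> infinite_sum P 1 ->
  0 < c0 -> 2 < alpha ->
  asym_equiv P (fun k => c0 * / (INR m ^ k) * Rpower (INR k) (- alpha)) ->
  (1 <= l0)%nat -> 0 < P l0 -> (forall k, (1 <= k < l0)%nat -> P k = 0) ->
  asym_equiv (fun M => pM m P l0 alpha M - pc m P)
    (fun M => pc m P ^ 2 * ((INR m - 1) * c0 / (alpha - 2)
               + (((INR m - 1) * INR l0 - 1) * INR m ^ l0 + 1) * P l0)
              / Rpower (INR M) (alpha - 2)).
Proof.
  intros Hm HP HP0 HP1 Hc0 Hal Hasym Hl0 HPl0 HPl.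
  destruct (deficit_equiv_gt m P c0 alpha l0 Hm HP HP0 HP1 Hc0 Hal Hasym Hl0 HPl)
    as [E0 [HE0 HD]].
  set (EM := fun M => sum_f_R0 (fun k => fm m k * lawXM P l0 alpha M k) M).
  set (c49 := (INR m - 1) * c0 / (alpha - 2) + (1 + fm m l0) * P l0) in HD.
  replace ((INR m - 1) * c0 / (alpha - 2)
            + (((INR m - 1) * INR l0 - 1) * INR m ^ l0 + 1) * P l0) with c49
    by (unfold c49, fm; ring).
  set (g := fun M => Rpower (INR M) (- (alpha - 2))).
  assert (Hc49 : 0 < c49).
  { pose proof (INR_ge_2 m Hm). pose proof (fm_nonneg m l0 Hm Hl0).
    assert (0 < (INR m - 1) * c0 / (alpha - 2)) by (apply Rdiv_lt_0_compat; nra).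
    assert (0 < (1 + fm m l0) * P l0) by (apply Rmult_lt_0_compat; lra).
    unfold c49. lra. }
  assert (Hv : eventually (fun M => 0 < c49 * g M))
    by (apply filter_forall; intros M; apply Rmult_lt_0_compat; [exact Hc49 | apply exp_pos]).
  assert (HE0pos : 0 <= E0)
    by (pose proof (sum_incr _ 0 E0 HE0 (fm_P_nonneg m P Hm HP HP0)) as H; simpl in H;
        pose proof (fm_P_nonneg m P Hm HP HP0 0%nat); lra).
  assert (Hpc : pc m P = 1 / (1 + E0)) by exact (pc_of_series m P E0 HE0).
  (* E_M -> E0, since the deficit is O(M^{-(alpha-2)}) *)
  assert (HEM : Un_cv EM E0).
  { assert (Hg0 : Un_cv (fun M => c49 * g M) 0).
    { replace 0 with (c49 * 0) by ring.
      apply CV_mult; [apply cv_const | apply Rpower_INR_neg_cv0; lra]. }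
    pose proof (CV_minus _ _ _ _ (cv_const E0) (cv_0_of_equiv_seq _ _ HD Hg0)) as H.
    rewrite Rminus_0_r in H. refine (cv_ext_loc _ _ _ _ H).
    apply filter_forall. intros M. unfold EM. ring. }
  assert (Hw : Un_cv (fun M => pc m P / (1 + EM M)) (pc m P ^ 2)).
  { replace (pc m P ^ 2) with (pc m P * / (1 + E0)) by (rewrite Hpc; field; lra).
    apply CV_mult; [apply cv_const | apply cv_inv; [lra |]].
    apply CV_plus; [apply cv_const | exact HEM]. }
  assert (Hpc_pos : 0 < pc m P ^ 2) by (rewrite Hpc; apply pow_lt, Rdiv_lt_0_compat; lra).
  (* p_M - p_c = (E0 - E_M) * p_c / (1 + E_M) *)
  apply asym_of_equiv_seq.
  { apply filter_forall. intros M. apply Rdiv_lt_0_compat; [apply Rmult_lt_0_compat; assumption | apply exp_pos]. }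
  refine (equiv_seq_ext _ _ _ _ _ _ (equiv_seq_mul_cv _ _ _ _ Hv Hpc_pos HD Hw)).
  - destruct (HEM 1 Rlt_0_1) as [N HN]. exists N. intros M HM.
    specialize (HN M HM). unfold R_dist in HN. apply Rabs_def2 in HN.
    unfold pM. fold (EM M). rewrite Hpc. field. lra.
  - apply filter_forall. intros M. unfold g. rewrite Rpower_Ropp.
    field. apply Rgt_not_eq, exp_pos.
Qed.

Lemma pM_asymptotics_eq2 m P c0 alpha l0 :
  (2 <= m)%nat -> (forall k, 0 <= P k) -> P 0%nat = 0 -> infinite_sum P 1 ->
  0 < c0 -> alpha = 2 ->
  asym_equiv P (fun k => c0 * / (INR m ^ k) * Rpower (INR k) (- alpha)) ->
  (1 <= l0)%nat -> (forall k, (1 <= k < l0)%nat -> P k = 0) ->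
  asym_equiv (fun M => pM m P l0 alpha M - pc m P)
             (fun M => 1 / ((INR m - 1) * c0) * / ln (INR M)).
Proof.
  intros Hm HP HP0 HP1 Hc0 -> Hasym Hl0 HPl.
  set (L := (INR m - 1) * c0). assert (HL : 0 < L) by (pose proof (INR_ge_2 m Hm); unfold L; nra).
  set (a := fun k => fm m k * P k).
  assert (Hln_pos : eventually (fun n => 0 < L * ln (INR n))).
  { exists 2%nat. intros n Hn. apply Rmult_lt_0_compat; [exact HL |].
    rewrite <- ln_1. apply le_INR in Hn. simpl in Hn. apply ln_increasing; lra. }
  assert (Hinf : cv_infty (fun n => L * ln (INR n))).
  { intros B. destruct (ln_INR_infty (B / L)) as [N HN]. exists N. intros n Hn.
    specialize (HN n Hn). apply (Rmult_lt_compat_l L) in HN; [| exact HL].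
    replace (L * (B / L)) with B in HN by (field; lra). exact HN. }
  assert (HS : equiv_seq (sum_f_R0 a) (fun n => L * ln (INR n))).
  { assert (Hsum : forall n, sum_f_R0 (fun k => (ln (INR k) - ln (INR (k - 1))) * L) n
                              = L * ln (INR n))
      by (intros n; rewrite <- scal_sum, sum_log_increments; reflexivity).
    refine (equiv_seq_ext _ _ _ _ (filter_forall _ (fun n => eq_refl))
              (filter_forall _ Hsum) (equiv_seq_partial_sums _ _ _ _)).
    - apply (equiv_seq_trans _ _ _ (summand_equiv m P c0 2 Hm Hc0 Hasym)).
      apply equiv_seq_sym.
      refine (equiv_seq_ext _ _ _ _ _ _
                (equiv_seq_mul (fun _ => L) _ _ _ log_increments_equiv)).
      + apply filter_forall. intros k. ring.
      + apply filter_forall. intros k. unfold L. replace (1 - 2) with (-1) by ring. reflexivity.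
      + apply filter_forall. intros k. lra.
    - intros B. destruct (Hinf B) as [N HN]. exists N. intros n Hn. rewrite Hsum. auto. }
  assert (Hpc : pc m P = 0).
  { apply pc_of_divergent. intros [l Hl].
    exact (not_cv_of_cv_infty _ l (equiv_seq_cv_infty _ _ HS Hinf) Hl). }
  (* 1 + E_M differs from the partial sum by a bounded amount *)
  set (EM := fun M => sum_f_R0 (fun k => fm m k * lawXM P l0 2 M k) M).
  set (C1 := P l0 * (1 + fm m l0)).
  assert (Hbound : forall M, Rabs (1 - C1 - (1 - sum_f_R0 P M)) <= 1 + Rabs C1 + 1).
  { intros M. pose proof (sum_incr P M 1 HP1 HP).
    pose proof (cond_pos_sum P M HP). pose proof (Rle_abs C1). pose proof (Rle_abs (- C1)).
    rewrite Rabs_Ropp in *. apply Rabs_le_between. lra. }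
  assert (HEM : equiv_seq (fun M => 1 + EM M) (fun M => L * ln (INR M))).
  { refine (equiv_seq_ext _ _ _ _ _ (filter_forall _ (fun n => eq_refl))
              (equiv_seq_add_negligible _ _ _ HS (negligible_of_bounded _ _ _ Hbound Hinf))).
    exists l0. intros M HM. unfold EM. rewrite expectation_truncated by assumption.
    replace (Rpower (INR M) (- (2 - 2))) with 1
      by (unfold Rpower; rewrite <- exp_0; f_equal; ring).
    unfold a, C1. ring. }
  apply asym_of_equiv_seq.
  { generalize Hln_pos. apply filter_imp. intros n Hn.
    assert (0 < ln (INR n)) by nra.
    apply Rmult_lt_0_compat; [apply Rdiv_lt_0_compat | apply Rinv_0_lt_compat]; lra. }
  refine (equiv_seq_ext _ _ _ _ _ _ (equiv_seq_inv _ _ Hln_pos HEM)).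
  - apply filter_forall. intros M. rewrite Hpc. unfold pM. fold (EM M). ring.
  - apply filter_forall. intros M. rewrite Rinv_mult. unfold Rdiv. ring.
Qed.

Theorem lemma8p3 (m : nat) (P : nat -> R) (c0 alpha : R) (l0 : nat) :
  (2 <= m)%nat ->
  (* P is the law of a {1,2,...}-valued random variable X_0^* *)
  (forall k, 0 <= P k) -> P 0%nat = 0 -> infinite_sum P 1 ->
  (* P(X_0^* = k) ~ c0 m^{-k} k^{-alpha} *)
  0 < c0 -> 2 <= alpha <= 4 ->
  asym_equiv P (fun k => c0 * / (INR m ^ k) * Rpower (INR k) (- alpha)) ->
  (* l0 = smallest k >= 1 with P(X_0^* = k) > 0 *)
  (1 <= l0)%nat -> 0 < P l0 -> (forall k, (1 <= k < l0)%nat -> P k = 0) ->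
  (2 < alpha ->
     let c49 := (INR m - 1) * c0 / (alpha - 2)
                + (((INR m - 1) * INR l0 - 1) * INR m ^ l0 + 1) * P l0 in
     let c48 := (pc m P) ^ 2 * c49 in
     asym_equiv (fun M => pM m P l0 alpha M - pc m P)
                (fun M => c48 / Rpower (INR M) (alpha - 2)))
  /\
  (alpha = 2 ->
     asym_equiv (fun M => pM m P l0 alpha M - pc m P)
                (fun M => 1 / ((INR m - 1) * c0) * / ln (INR M))).
Proof.
  intros Hm HP HP0 HP1 Hc0 _ Hasym Hl0 HPl0 HPl. split.
  - intros Hgt. exact (pM_asymptotics_gt m P c0 alpha l0 Hm HP HP0 HP1 Hc0 Hgt Hasym Hl0 HPl0 HPl).
  - intros Heq. exact (pM_asymptotics_eq2 m P c0 alpha l0 Hm HP HP0 HP1 Hc0 Heq Hasym Hl0 HPl).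
Qed.
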